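(* Let $\mathbf{M}$ be any many-valued logic and let $A_1,\ldots,A_n$ be formulas that are not tautologies of $\mathbf{M}$. Then there is a finite-valued logic $\mathbf{M}'$ over the same language such that (1) none of $A_1,\ldots,A_n$ is a tautology of $\mathbf{M}'$; (2) $\mathrm{Taut}(\mathbf{M})\subseteq\mathrm{Taut}(\mathbf{M}')$; and (3) $|V(\mathbf{M}')| \le \prod_{i=1}^n \xi(A_i)$, where $\xi(A_i)$ is the number of subformulas of $A_i$ plus $1$.
   Context: A propositional language consists of variables $X_1,X_2,\ldots$ and finitely many connectives with given arities (0-ary ones are constants). A many-valued logic $\mathbf{M}$ is given by a set $V(\mathbf{M})$ of truth values, a subset $V^+(\mathbf{M})$ of designated values, and for each $n$-ary connective $\Box$ a truth function $\widetilde{\Box}\colon V(\mathbf{M})^n\to V(\mathbf{M})$; it is finite-valued if $V(\mathbf{M})$ is finite. A valuation assigns truth values to variables and extends to all formulas via the truth functions. A formula is a tautology of $\mathbf{M}$ if it receives a designated value under every valuation; $\mathrm{Taut}(\mathbf{M})$ denotes the set of tautologies. *)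

From Stdlib Require Import List.
From mathcomp Require Import all_boot.
Set Implicit Arguments. Unset Strict Implicit. Unset Printing Implicit Defensive.

Record language := Language {
  conn : finType;
  arity : conn -> nat }.

Inductive formula (L : language) : Type :=
| Var : nat -> formula L
| App : forall c : conn L, {ffun 'I_(arity c) -> formula L} -> formula L.

Inductive subformula (L : language) : formula L -> formula L -> Prop :=
| sub_refl A : subformula A A
| sub_app B (c : conn L) (args : {ffun 'I_(arity c) -> formula L}) (i : 'I_(arity c)) :
    subformula B (args i) -> subformula B (App args).

Definition nsub (L : language) (A : formula L) (k : nat) : Prop :=
  exists l : list (formula L),
    NoDup l /\ (forall B, In B l <-> subformula B A) /\ length l = k.

Record logic (L : language) := Logic {
  tv : Type;
  designated : tv -> Prop;
  truthfun : forall c : conn L, ('I_(arity c) -> tv) -> tv }.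

Fixpoint eval (L : language) (M : logic L) (v : nat -> tv M) (A : formula L) : tv M :=
  match A with
  | Var n => v n
  | App c args => @truthfun L M c (fun i => eval v (args i))
  end.

Definition tautology (L : language) (M : logic L) (A : formula L) : Prop :=
  forall v : nat -> tv M, @designated L M (eval v A).

From Pilot Require Import Defs.
From Stdlib Require Import List.
From mathcomp Require Import all_boot boolp.
Set Implicit Arguments. Unset Strict Implicit. Unset Printing Implicit Defensive.

(* A valuation v refuting A in M only ever uses the finitely many values
   v(B), B a subformula of A.  Keep just these, indexed by a list l of the
   subformulas, plus one extra designated value "undefined" standing for
   everything else: a truth function returns the index of its M-value when
   that value is among the kept ones, and "undefined" otherwise.  Evaluating
   a formula in this logic either yields "undefined" or tracks its value in M
   under some valuation, so tautologies of M survive; and the valuation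
   sending each variable to its own index reproduces v on the subformulas of
   A, so A is still refuted.  A product of such logics, one per A_i, refutes
   all A_i at once and has at most prod (k_i + 1) values. *)

Lemma In_nth_ord (T : Type) (x0 x : T) (s : seq T) :
  In x s -> exists j : 'I_(size s), nth x0 s j = x.
Proof.
elim: s => //= y s IH [<-|/IH [j <-]]; first by exists ord0.
by exists (lift ord0 j).
Qed.

Lemma card_dffun (I : finType) (T : I -> finType) :
  #|{dffun forall i : I, T i}| = \prod_(i : I) #|T i|.
Proof. by rewrite card_dep_ffun foldrE big_map big_enum. Qed.

Section Formulas.
Variable L : language.

Fixpoint formula_nested_ind (P : formula L -> Prop)
    (HVar : forall m, P (Var L m))
    (HApp : forall c (args : {ffun 'I_(arity c) -> formula L}),
              (forall t, P (args t)) -> P (App args))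
    (A : formula L) : P A :=
  match A with
  | Var m => HVar m
  | App c args => HApp c args (fun t => formula_nested_ind HVar HApp (args t))
  end.

Lemma subformula_trans (A B C : formula L) :
  subformula A B -> subformula B C -> subformula A C.
Proof. by move=> AB BC; elim: BC AB => // ? c args i _ IH /IH /sub_app; apply. Qed.

Lemma subformula_arg (B : formula L) c (args : {ffun 'I_(arity c) -> formula L}) t :
  subformula (App args) B -> subformula (args t) B.
Proof. by apply: subformula_trans; apply: (sub_app (i := t) (Defs.sub_refl _)). Qed.

End Formulas.

Section PartialLogic.
Variables (L : language) (M : logic L) (v : nat -> tv M) (l : seq (formula L)).

Definition partial_value (j : 'I_(size l)) : tv M := eval v (nth (Var L 0) l j).

(* [None] is "undefined"; decoding it to [v 0] is arbitrary and harmless, since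
   a truth function with an undefined argument returns [None]. *)
Definition partial_decode (x : option 'I_(size l)) : tv M := oapp partial_value (v 0) x.

Definition partial_truthfun c (a : 'I_(arity c) -> option 'I_(size l)) :=
  if [forall t, a t != None] then
    [pick j | `[< partial_value j = @truthfun L M c (partial_decode \o a) >]]
  else None.

Definition partial_designated (x : option 'I_(size l)) : Prop :=
  if x is Some j then designated (partial_value j) else True.

Definition partial_logic : logic L := Logic partial_designated partial_truthfun.

Lemma eval_partial_logic (w : nat -> tv partial_logic) B :
  eval w B = None \/ partial_decode (eval w B) = eval (partial_decode \o w) B.
Proof.
elim/formula_nested_ind: B => [m|c args IH]; first by right.
rewrite /= /partial_truthfun; case: forallP => [defined|]; last by left.
case: pickP => [j /asboolP /= ->|]; last by left.
right; congr truthfun; apply: funext => t /=.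
by case: (IH t) => // undef; move: (defined t); rewrite undef.
Qed.

Lemma partial_logic_tautology B : tautology M B -> tautology partial_logic B.
Proof.
move=> tautB w; have [-> //|] := eval_partial_logic w B.
by case: (eval w B) => //= j ->; apply: tautB.
Qed.

Definition var_index (m : nat) : tv partial_logic :=
  [pick j : 'I_(size l) | `[< nth (Var L 0) l j = Var L m >]].

Section Refutation.
Variable A : formula L.
Hypothesis subA_in_l : forall B, subformula B A -> In B l.

Lemma eval_var_index B : subformula B A ->
  exists j, eval var_index B = Some j /\ partial_value j = eval v B.
Proof.
have index_of C : subformula C A -> exists j : 'I_(size l), nth (Var L 0) l j = C.
  by move/subA_in_l/(In_nth_ord (Var L 0)).
elim/formula_nested_ind: B => [m|c args IH] subBA.
  rewrite /= /var_index; case: pickP => [j /asboolP jm|none].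
    by exists j; rewrite /partial_value jm.
  by have [j jm] := index_of _ subBA; move/negbT/asboolPn: (none j).
have {}IH t := IH t (subformula_arg t subBA).
rewrite /= /partial_truthfun; case: forallP => [_|]; last first.
  by case=> t; have [j [-> _]] := IH t.
have -> : partial_decode \o (fun t => eval var_index (args t)) = fun t => eval v (args t).
  by apply: funext => t /=; have [j [-> <-]] := IH t.
case: pickP => [j /asboolP jv|none]; first by exists j.
have [j jB] := index_of _ subBA.
by move/negbT/asboolPn: (none j); rewrite /partial_value jB.
Qed.

Lemma partial_logic_refutes : ~ designated (eval v A) ->
  ~ designated (eval var_index A).
Proof. by have [j [-> /= ->]] := eval_var_index (Defs.sub_refl A). Qed.

End Refutation.
End PartialLogic.

Section ProductLogic.
Variables (L : language) (I : finType) (M : I -> logic L).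

Definition prod_logic : logic L :=
  @Logic L {dffun forall i : I, tv (M i)}
    (fun x => forall i, designated (x i))
    (fun c a => [ffun i => @truthfun L (M i) c (fun t => a t i)]).

Lemma eval_prod_logic (w : nat -> tv prod_logic) B i :
  eval w B i = eval (fun m => w m i) B.
Proof.
elim/formula_nested_ind: B => [//|c args IH] /=.
by rewrite ffunE; congr truthfun; apply: funext => t; apply: IH.
Qed.

Lemma prod_logic_tautology B :
  (forall i, tautology (M i) B) -> tautology prod_logic B.
Proof. by move=> tautB w i; rewrite eval_prod_logic; apply: tautB. Qed.

Lemma prod_logic_refutes (w : forall i, nat -> tv (M i)) A i :
  ~ designated (eval (w i) A) -> ~ tautology prod_logic A.
Proof.
move=> refuted /(_ (fun m => [ffun j => w j m]) i); rewrite eval_prod_logic.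
by under [fun m => _]funext do rewrite ffunE.
Qed.

End ProductLogic.

Theorem proposition2 (L : language) (M : logic L) (n : nat)
    (A : 'I_n -> formula L) (k : 'I_n -> nat) :
  (forall i, ~ tautology M (A i)) ->
  (forall i, nsub (A i) (k i)) ->
  exists (V' : finType) (D' : V' -> Prop)
         (F' : forall c : conn L, ('I_(arity c) -> V') -> V'),
    let M' := @Logic L V' D' F' in
    (forall i, ~ tautology M' (A i)) /\
    (forall B, tautology M B -> tautology M' B) /\
    #|V'| <= \prod_(i < n) (k i).+1.
Proof.
move=> nontaut nsubA.
have [v refutes] := choice (fun i => (existsNP _).2 (nontaut i)).
have [l subs] := choice nsubA.
pose Ms i := partial_logic (v i) (l i).
exists {dffun forall i, option 'I_(size (l i))}.
exists (@designated L (prod_logic Ms)), (@truthfun L (prod_logic Ms)); split; [|split].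
- move=> i; apply: (prod_logic_refutes (w := fun j => var_index (v j) (l j))).
  by apply: partial_logic_refutes (refutes i) => B /(subs i).2.1.
- move=> B tautB; apply: (prod_logic_tautology (M := Ms)) => i.
  exact: partial_logic_tautology.
- rewrite card_dffun; apply/eq_leq/eq_bigr => i _.
  by have [_ [_ <-]] := subs i; rewrite card_option card_ord.
Qed.
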